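(* Let $p$ be a prime, $\mathbb{C}_p$ the field of complex $p$-adic numbers with norm $|\cdot|_p$, $a,b,c\in\mathbb{C}_p$ with $b\neq0$, $c\neq ab$, $f(x)=\frac{x+a}{bx+c}$ for $x\neq -c/b$. Fix a square root $\sqrt{(c-1)^2+4ab}$ and let $x_{1}=\frac{1-c+\sqrt{(c-1)^2+4ab}}{2b}$ (a fixed point of $f$). Assume $$\left|\frac{c-ab}{(bx_1+c)^2}\right|_p<1\qquad\text{and}\qquad \left|\frac{b}{bx_1+c}\right|_p=\left|\frac{2b}{1+c+\sqrt{(c-1)^2+4ab}}\right|_p\le 1.$$ Then $V_1(x_1)\subset A(x_1)$.
   Context: $V_1(x_1)=\{x\in\mathbb{C}_p:|x-x_1|_p<1\}$. The basin of attraction of a fixed point $x_0$ is $A(x_0)=\{y\in\mathbb{C}_p: f^n(y)\to x_0 \text{ as } n\to\infty\}$. *)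

From HB Require Import structures.
From mathcomp Require Import all_boot all_order all_algebra.
From mathcomp Require Import all_classical all_reals all_analysis.
Set Implicit Arguments. Unset Strict Implicit. Unset Printing Implicit Defensive.
Import Order.TTheory GRing.Theory Num.Theory.
Import numFieldNormedType.Exports.
Local Open Scope ring_scope.
Local Open Scope classical_set_scope.

(* We axiomatize
   the relevant structure: an algebraically closed field K with an absolute value
   nrm : K -> R that is non-archimedean, restricts to the p-adic norm
   (|p| = 1/p), and for which K is complete.  C_p is such a field. *)
Record CpLike (p : nat) (R : realType) (K : closedFieldType) (nrm : K -> R) : Prop := {
  nrm_ge0 : forall x, 0 <= nrm x;
  nrm_eq0 : forall x, nrm x = 0 <-> x = 0;
  nrmM : forall x y, nrm (x * y) = nrm x * nrm y;
  nrm_ultra : forall x y, nrm (x + y) <= Num.max (nrm x) (nrm y);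
  nrm_p : nrm (p%:R) = (p%:R)^-1;
  nrm_complete : forall u : nat -> K,
    (forall e : R, 0 < e -> exists N, forall m n, (N <= m)%N -> (N <= n)%N ->
        nrm (u m - u n) < e) ->
    exists l, forall e : R, 0 < e -> exists N, forall n, (N <= n)%N -> nrm (u n - l) < e
}.

Definition mobius (K : fieldType) (a b c : K) (x : K) : K := (x + a) / (b * x + c).

Definition V1 (R : realType) (K : fieldType) (nrm : K -> R) (x1 : K) : set K :=
  [set x | nrm (x - x1) < 1].

Definition basin (R : realType) (K : fieldType) (nrm : K -> R) (a b c x0 : K) : set K :=
  [set y | (forall n, b * iter n (mobius a b c) y + c != 0) /\
           (fun n => nrm (iter n (mobius a b c) y - x0)) @ \oo --> (0 : R)].

From HB Require Import structures.
From mathcomp Require Import all_boot all_order all_algebra.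
From mathcomp Require Import all_classical all_reals all_analysis.
From mathcomp Require Import ring.
Set Implicit Arguments. Unset Strict Implicit. Unset Printing Implicit Defensive.
Import Order.TTheory GRing.Theory Num.Theory.
Import numFieldNormedType.Exports.
Local Open Scope ring_scope.
Local Open Scope classical_set_scope.

(* With D = b x1 + c, the fixed-point equation gives
     f(x) - x1 = (c - ab) (x - x1) / ((bx + c) D)   and   bx + c = D (1 + (b/D)(x - x1)).
   For |x - x1| < 1 and |b/D| <= 1 the ultrametric inequality makes
   |1 + (b/D)(x - x1)| = 1, so bx + c is never 0 and
   |f(x) - x1| = |(c - ab)/D^2| |x - x1|: f contracts V_1(x1) towards x1 by a
   fixed ratio smaller than 1, and the orbit of every point of V_1(x1) converges
   geometrically to x1. *)

Section ContractionToFixedPoint.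
Variables (R : realType) (V : zmodType) (nrm : V -> R) (g : V -> V) (x0 : V) (q : R).
Hypotheses (nrm_ge0 : forall x, 0 <= nrm x) (q_ge0 : 0 <= q) (q_lt1 : q < 1).
Hypothesis contract :
  forall x, nrm (x - x0) < 1 -> nrm (g x - x0) <= q * nrm (x - x0).

Lemma iter_contraction_le y n :
  nrm (y - x0) < 1 -> nrm (iter n g y - x0) <= q ^+ n * nrm (y - x0).
Proof.
move=> y_lt1; elim: n => [|n IHn] /=; first by rewrite expr0 mul1r.
have shrink : q ^+ n * nrm (y - x0) <= nrm (y - x0).
  by rewrite ler_piMl // exprn_ile1 // ltW.
have yn_lt1 := le_lt_trans IHn (le_lt_trans shrink y_lt1).
rewrite exprS -mulrA; apply: le_trans (contract yn_lt1) _.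
exact: ler_wpM2l.
Qed.

Lemma iter_contraction_lt1 y n : nrm (y - x0) < 1 -> nrm (iter n g y - x0) < 1.
Proof.
move=> y_lt1; apply: le_lt_trans (iter_contraction_le n y_lt1) _.
by apply: le_lt_trans y_lt1; rewrite ler_piMl // exprn_ile1 // ltW.
Qed.

Lemma iter_contraction_cvg y :
  nrm (y - x0) < 1 -> (fun n => nrm (iter n g y - x0)) @ \oo --> (0 : R).
Proof.
move=> y_lt1.
apply: (@squeeze_cvgr _ _ _ _ (cst 0) (fun n => q ^+ n * nrm (y - x0))).
- by near=> n; rewrite nrm_ge0 iter_contraction_le.
- exact: cvg_cst.
- rewrite -(mul0r (nrm (y - x0))); apply: cvgMr_tmp.
  by apply: cvg_expr; rewrite ger0_norm.
Unshelve. all: by end_near.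
Qed.

End ContractionToFixedPoint.

Section MobiusAlgebra.
Variables (K : fieldType) (a b c : K).

Lemma mobius_subr_fixed x0 x :
  x0 * (b * x0 + c) = x0 + a -> b * x + c != 0 -> b * x0 + c != 0 ->
  mobius a b c x - x0 = (c - a * b) / ((b * x + c) * (b * x0 + c)) * (x - x0).
Proof.
move=> fix0 dx dx0; rewrite /mobius.
apply: (mulIf (mulf_neq0 dx dx0)).
rewrite [RHS]mulrAC divfK ?mulf_neq0 // mulrBl mulrA divfK // mulrCA fix0.
ring.
Qed.

Lemma mobius_den_factor x0 x : b * x0 + c != 0 ->
  b * x + c = (b * x0 + c) * (1 + b / (b * x0 + c) * (x - x0)).
Proof.
by move=> dx0; rewrite mulrDr mulr1 mulrA mulrCA divff // mulr1; ring.
Qed.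

Section QuadraticRoot.
Variables (s x1 : K).
Hypotheses (two_neq0 : (2 : K) != 0)
  (s_sqr : s ^+ 2 = (c - 1) ^+ 2 + 4 * a * b)
  (x1_def : 2 * b * x1 = 1 - c + s).

Lemma mobius_root_den : 2 * (b * x1 + c) = 1 + c + s.
Proof. by rewrite mulrDr mulrA x1_def; ring. Qed.

Lemma mobius_root_fixed : b != 0 -> x1 * (b * x1 + c) = x1 + a.
Proof.
move=> b_neq0; apply/eqP; rewrite -subr_eq0.
have four_b : (2 * 2 * b : K) != 0 by rewrite !mulf_neq0.
rewrite -(mulrI_eq0 _ (mulfI four_b)).
have -> : 2 * 2 * b * (x1 * (b * x1 + c) - (x1 + a))
    = (2 * b * x1) ^+ 2 + 2 * (c - 1) * (2 * b * x1) - 4 * a * b by ring.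
rewrite x1_def.
have -> : (1 - c + s) ^+ 2 + 2 * (c - 1) * (1 - c + s) - 4 * a * b
    = s ^+ 2 - ((c - 1) ^+ 2 + 4 * a * b) by ring.
by rewrite s_sqr subrr.
Qed.

Lemma mobius_root_den_neq0 : c != a * b -> b * x1 + c != 0.
Proof.
move=> c_neq_ab; apply: contra_neq c_neq_ab => D0.
have s_eq : s = 2 * (b * x1 + c) - (1 + c) by rewrite mobius_root_den; ring.
rewrite D0 mulr0 sub0r in s_eq.
have : 2 * 2 * (c - a * b) = 0.
  by rewrite -[RHS](subrr (s ^+ 2)) {2}s_sqr s_eq; ring.
by move/eqP; rewrite !mulf_eq0 (negPf two_neq0) /= subr_eq0 => /eqP.
Qed.

End QuadraticRoot.

End MobiusAlgebra.

Section NonArchimedeanAbsoluteValue.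
Variables (p : nat) (R : realType) (K : closedFieldType) (nrm : K -> R).
Hypothesis HK : CpLike p nrm.

Lemma nrm0 : nrm 0 = 0.
Proof. exact/(nrm_eq0 HK). Qed.

Lemma nrm_neq0 x : x != 0 -> nrm x != 0.
Proof. by apply: contra_neq => /(nrm_eq0 HK). Qed.

Lemma nrm1 : nrm 1 = 1.
Proof.
apply: (mulfI (nrm_neq0 (oner_neq0 K))).
by rewrite -(nrmM HK) !mulr1.
Qed.

Lemma nrmN x : nrm (- x) = nrm x.
Proof.
have nrmN1 : nrm (-1) = 1.
  apply/eqP; rewrite -sqrp_eq1 ?(nrm_ge0 HK) //.
  by rewrite expr2 -(nrmM HK) mulrNN mulr1 nrm1.
by rewrite -mulN1r (nrmM HK) nrmN1 mul1r.
Qed.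

Lemma nrmV x : nrm x^-1 = (nrm x)^-1.
Proof.
have [->|x_neq0] := eqVneq x 0; first by rewrite invr0 nrm0 invr0.
apply: (mulfI (nrm_neq0 x_neq0)).
by rewrite -(nrmM HK) !mulfV ?nrm1 ?nrm_neq0.
Qed.

Lemma nrm_add1_small y : nrm y < 1 -> nrm (1 + y) = 1.
Proof.
move=> y_lt1; apply/eqP; rewrite eq_le; apply/andP; split.
  apply: le_trans (nrm_ultra HK 1 y) _.
  by rewrite nrm1 ge_max lexx ltW.
have := nrm_ultra HK (1 + y) (- y); rewrite addrK nrm1 nrmN le_max.
by case/orP => // /le_lt_trans/(_ y_lt1); rewrite ltxx.
Qed.

Lemma char_neq2 : (1 < p)%N -> (2 : K) != 0.
Proof.
move=> p_gt1; apply/eqP => two0.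
have p_odd : p%:R = (odd p)%:R :> K.
  by rewrite -{1}(odd_double_half p) natrD -muln2 natrM two0 mulr0 addr0.
have := nrm_p HK; rewrite p_odd; case: (odd p) => /=.
  rewrite nrm1 => /(congr1 GRing.inv); rewrite invr1 invrK => p1.
  by move: p_gt1; rewrite -(ltr_nat R) -p1 ltxx.
rewrite nrm0 => /esym/eqP; rewrite invr_eq0 pnatr_eq0 => /eqP p0.
by rewrite p0 in p_gt1.
Qed.

Section MobiusNearFixedPoint.
Variables (a b c x0 : K).
Hypotheses (den0_neq0 : b * x0 + c != 0) (b_den0_le1 : nrm (b / (b * x0 + c)) <= 1).

Lemma nrm_mobius_den x : nrm (x - x0) < 1 -> nrm (b * x + c) = nrm (b * x0 + c).
Proof.
move=> x_lt1; rewrite (mobius_den_factor x den0_neq0) (nrmM HK).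
rewrite nrm_add1_small ?mulr1 // (nrmM HK); apply: le_lt_trans x_lt1.
by rewrite ler_piMl ?(nrm_ge0 HK).
Qed.

Lemma mobius_den_neq0 x : nrm (x - x0) < 1 -> b * x + c != 0.
Proof.
move=> x_lt1; apply/eqP => /(congr1 nrm); rewrite nrm0 nrm_mobius_den // => /eqP.
by rewrite (negPf (nrm_neq0 den0_neq0)).
Qed.

Lemma nrm_mobius_subr_fixed x :
  x0 * (b * x0 + c) = x0 + a -> nrm (x - x0) < 1 ->
  nrm (mobius a b c x - x0) = nrm ((c - a * b) / (b * x0 + c) ^+ 2) * nrm (x - x0).
Proof.
move=> fix0 x_lt1.
rewrite mobius_subr_fixed ?(mobius_den_neq0 x_lt1) // !(nrmM HK, nrmV).
by rewrite nrm_mobius_den // expr2 (nrmM HK).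
Qed.

End MobiusNearFixedPoint.

End NonArchimedeanAbsoluteValue.

Theorem lemma3p5 (p : nat) (R : realType) (K : closedFieldType) (nrm : K -> R)
  (hp : prime p) (HK : CpLike p nrm) (a b c s : K)
  (hb : b != 0) (hc : c != a * b)
  (hs : s ^+ 2 = (c - 1) ^+ 2 + 4 * a * b) :
  let x1 := (1 - c + s) / (2 * b) in
  nrm ((c - a * b) / (b * x1 + c) ^+ 2) < 1 ->
  nrm (b / (b * x1 + c)) = nrm (2 * b / (1 + c + s)) ->
  nrm (2 * b / (1 + c + s)) <= 1 ->
  V1 nrm x1 `<=` basin nrm a b c x1.
Proof.
move=> x1 q_lt1 b_den_eq; rewrite -b_den_eq => b_den_le1 y y_lt1.
have two_neq0 := char_neq2 HK (prime_gt1 hp).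
have x1_def : 2 * b * x1 = 1 - c + s by rewrite mulrC divfK ?mulf_neq0.
have den_neq0 := mobius_root_den_neq0 two_neq0 hs x1_def hc.
have fix1 := mobius_root_fixed two_neq0 hs x1_def hb.
have contract x : nrm (x - x1) < 1 ->
    nrm (mobius a b c x - x1) <= nrm ((c - a * b) / (b * x1 + c) ^+ 2) * nrm (x - x1).
  by move=> x_lt1; rewrite (nrm_mobius_subr_fixed HK) ?lexx.
have orbit_lt1 n :=
  iter_contraction_lt1 (nrm_ge0 HK) (nrm_ge0 HK _) q_lt1 contract n y_lt1.
have orbit_cvg :=
  iter_contraction_cvg (nrm_ge0 HK) (nrm_ge0 HK _) q_lt1 contract y_lt1.
split=> [n|]; last exact: orbit_cvg.
exact: (mobius_den_neq0 HK den_neq0 b_den_le1 (orbit_lt1 n)).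
Qed.
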